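(* Let $k\ge1$, $1\le r\le 4k^2$, $\mathcal{B}=\mathcal{B}(2k,2k;r)$ and $G=D_4$. Then the number of equivalence classes of $\mathcal{B}$ under $G$ is \[|\mathcal{O}_G(\mathcal{B})|=\frac18\left(\binom{4k^2}{r}+2\binom{k^2}{\frac r4}+3\binom{2k^2}{\frac r2}+2\sum_{t=0}^{r}\binom{2k}{t}\binom{k(2k-1)}{\frac{r-t}{2}}\right).\]
   Context: $\mathcal{B}(2k,2k;r)$ is the set of all subsets of exactly $r$ cells (''boards'' with $r$ blocked cells) of a $2k\times 2k$ grid. The dihedral group $D_4$ of the 8 symmetries of the square (four rotations about the center and reflections across the horizontal midline, vertical midline and both diagonals) acts on boards; $\mathcal{O}_G(\mathcal{B})$ is the set of orbits (equivalence classes). Convention: a binomial coefficient $\binom{a}{b}$ is $0$ when $b$ is not a nonnegative integer or $b>a$. *)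

From mathcomp Require Import all_boot all_order all_algebra.
Set Implicit Arguments. Unset Strict Implicit. Unset Printing Implicit Defensive.

(* Cells of an n x n grid: (row, column), coordinates 0..n-1. *)
Definition cell (n : nat) := ('I_n * 'I_n)%type.

Definition d4 (n : nat) (g : 'I_8) (c : cell n) : cell n :=
  let: (i, j) := c in
  match val g with
  | 0 => (i, j)
  | 1 => (j, rev_ord i)                  (* rotation by 90 degrees *)
  | 2 => (rev_ord i, rev_ord j)          (* rotation by 180 degrees *)
  | 3 => (rev_ord j, i)                  (* rotation by 270 degrees *)
  | 4 => (rev_ord i, j)                  (* reflection across horizontal midline *)
  | 5 => (i, rev_ord j)                  (* reflection across vertical midline *)
  | 6 => (j, i)                          (* reflection across main diagonal *)
  | _ => (rev_ord j, rev_ord i)          (* reflection across anti-diagonal *)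
  end.

(* Action on boards (sets of blocked cells). *)
Definition d4_board (n : nat) (g : 'I_8) (B : {set cell n}) : {set cell n} :=
  [set d4 g c | c in B].

Definition boards (n r : nat) : {set {set cell n}} :=
  [set B : {set cell n} | #|B| == r].

Definition d4_equiv (n : nat) (B B' : {set cell n}) : bool :=
  [exists g : 'I_8, d4_board g B == B'].

Definition orbits (n r : nat) : {set {set {set cell n}}} :=
  [set [set B' in boards n r | d4_equiv B B'] | B in boards n r].

(* binomial C(a, num/den), taken to be 0 when num/den is not an integer *)
Definition binomq (a num den : nat) : nat :=
  if den %| num then 'C(a, num %/ den) else 0.

From mathcomp Require Import all_boot all_order all_algebra all_fingroup.
From mathcomp Require Import zify.
Set Implicit Arguments. Unset Strict Implicit. Unset Printing Implicit Defensive.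

(* Burnside's lemma: 8 |O| is the sum, over the eight symmetries g, of the
   number of r-boards fixed by g, and a board is fixed by g exactly when it is
   a union of cycles of g acting on the cells.  On a grid of even side no cell
   lies at the centre or on a midline, so every cycle of a symmetry other than
   the diagonal reflections has length the order of that symmetry (1, 4 or 2);
   its fixed boards are the choices of r/order cycles among 4k^2/order.  A
   diagonal reflection fixes the 2k cells of its diagonal and swaps the other
   cells in k(2k-1) pairs; choosing t fixed cells and (r-t)/2 pairs gives the
   sum. *)

Lemma card_nat_fibers (T : finType) (D : {pred T}) (f : T -> nat) n :
  {in D, forall x, f x <= n} ->
  #|D| = \sum_(0 <= t < n.+1) #|[pred x in D | f x == t]|.
Proof.
move=> le_fn; rewrite -sum1_card big_mkord.
rewrite (partition_big (fun x => inord (f x) : 'I_n.+1) predT) //=.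
apply: eq_bigr => t _; rewrite -sum1_card; apply: eq_bigl => x; rewrite !inE.
by case Dx: (x \in D); rewrite //= -val_eqE /= inordK ?ltnS ?le_fn.
Qed.

Section SubsetCounting.
Variable X : finType.
Implicit Types (A : {set X}).

Lemma card_draws_mul A d q : 0 < d ->
  #|[set U : {set X} | U \subset A & #|U| * d == q]| = binomq #|A| q d.
Proof.
move=> d_gt0; rewrite /binomq; case: ifP => [/dvdnP[m ->] | not_dvd].
  by rewrite mulnK // -cards_draws; apply: eq_card => U; rewrite !inE eqn_pmul2r.
apply/eqP; rewrite cards_eq0; apply/eqP/setP => U; rewrite !inE.
by apply: contraFF not_dvd => /andP[_ /eqP <-]; rewrite dvdn_mull.
Qed.

Lemma card_subsets_disjoint_setU A1 A2 (P1 P2 : pred {set X}) : [disjoint A1 & A2] ->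
  #|[set U : {set X} | U \subset A1 :|: A2 & P1 (U :&: A1) && P2 (U :&: A2)]| =
  #|[set U : {set X} | U \subset A1 & P1 U]| * #|[set U : {set X} | U \subset A2 & P2 U]|.
Proof.
move=> disjA12.
have setUK (U1 U2 : {set X}) : U1 \subset A1 -> U2 \subset A2 ->
    (U1 :|: U2) :&: A1 = U1 /\ (U1 :|: U2) :&: A2 = U2.
  move=> sU1 sU2; rewrite !setIUl (setIidPl sU1) (setIidPl sU2).
  rewrite !disjoint_setI0 ?setU0 ?set0U //.
    exact: disjointWl sU1 disjA12.
  by apply: disjointWl sU2 _; rewrite disjoint_sym.
rewrite -cardsX -(@card_in_imset _ _ (fun U => (U :&: A1, U :&: A2))).
  apply: eq_card => -[U1 U2]; rewrite !inE /=; apply/imsetP/andP => [[U] | ].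
    by rewrite inE => /andP[_ /andP[P1U P2U]] [-> ->]; rewrite !subsetIr P1U P2U.
  move=> [/andP[sU1 P1U1] /andP[sU2 P2U2]].
  have [U1K U2K] := setUK _ _ sU1 sU2.
  by exists (U1 :|: U2); rewrite ?inE ?setUSS ?U1K ?U2K ?P1U1.
move=> U V; rewrite !inE => /andP[sU _] /andP[sV _] [eq1 eq2].
by rewrite -(setIidPl sU) -(setIidPl sV) !setIUr eq1 eq2.
Qed.

Lemma card_weighted_draws A1 A2 r : [disjoint A1 & A2] ->
  #|[set U : {set X} | U \subset A1 :|: A2 & #|U :&: A1| + #|U :&: A2| * 2 == r]| =
  \sum_(0 <= t < r.+1) 'C(#|A1|, t) * binomq #|A2| (r - t) 2.
Proof.
move=> disjA12.
rewrite (@card_nat_fibers _ _ (fun U : {set X} => #|U :&: A1|) r); last first.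
  by move=> U; rewrite inE => /andP[_ /eqP <-]; rewrite leq_addr.
apply: eq_big_nat => t /andP[_ le_tr]; rewrite ltnS in le_tr.
rewrite -cards_draws -card_draws_mul // -card_subsets_disjoint_setU //.
apply: eq_card => U; rewrite !inE -andbA; congr (_ && _).
by rewrite andbC; case: eqP => [-> | _] //=; rewrite -(eqn_add2l t (_ * 2)) subnKC.
Qed.

End SubsetCounting.

Section StableSets.
Variable T : finType.
Implicit Types (s : {perm T}) (B : {set T}) (U V : {set {set T}}).

Definition stable_sets s r := [set B : {set T} | (#|B| == r) && (s @: B == B)].

Lemma porbits_partition s : partition (porbits s) [set: T].
Proof.
have acts_T : [acts <[s]>%g, on [set: T] | 'P] by apply/actsP => a _ x; rewrite !inE.
congr (partition _ _): (orbit_partition acts_T); rewrite /porbits porbitE.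
by apply/setP => O; apply/imsetP/imsetP => -[x _ ->]; exists x.
Qed.

Lemma porbit_sub_stable s B x : s @: B = B -> x \in B -> porbit s x \subset B.
Proof.
move=> sB Bx; apply/subsetP => _ /porbitP[i ->].
elim: i => [|i IHi]; first by rewrite expg0 perm1.
by rewrite expgSr permM -sB imset_f.
Qed.

Lemma stable_cover s U : U \subset porbits s -> s @: cover U = cover U.
Proof.
move=> sUs; apply/eqP; rewrite eqEcard (card_imset _ perm_inj) leqnn andbT.
apply/subsetP => _ /imsetP[x /bigcupP[O UO Ox] ->]; apply/bigcupP; exists O => //.
have /imsetP[y _ defO] := subsetP sUs O UO; rewrite defO in Ox *.
by case/porbitP: Ox => i ->; rewrite -permM -expgSr mem_porbit.
Qed.

Lemma cover_porbitsS s U V : U \subset porbits s -> V \subset porbits s ->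
  cover U \subset cover V -> U \subset V.
Proof.
move=> sUs sVs sUV; apply/subsetP => O UO.
have /imsetP[x _ defO] := subsetP sUs O UO; rewrite {}defO in UO *.
have /bigcupP[O' VO' O'x] : x \in cover V.
  by apply: (subsetP sUV); apply/bigcupP; exists (porbit s x) => //; apply: porbit_id.
have /imsetP[y _ defO'] := subsetP sVs O' VO'; rewrite defO' in VO' O'x.
by rewrite -eq_porbit_mem in O'x; rewrite (eqP O'x).
Qed.

Lemma stable_set_cover s B : s @: B = B -> B = cover [set O in porbits s | O \subset B].
Proof.
move=> sB; apply/setP => x; apply/idP/bigcupP => [Bx | [O]].
  by exists (porbit s x); rewrite ?porbit_id // inE imset_f ?porbit_sub_stable.
by rewrite inE => /andP[_ /subsetP]; apply.
Qed.

Lemma card_stable_sets s r : #|stable_sets s r| =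
  #|[set U in powerset (porbits s) | \sum_(O in U) #|O| == r]|.
Proof.
have sum_cover U : U \subset porbits s -> \sum_(O in U) #|O| = #|cover U|.
  by move=> sUs; apply/eqP; apply: trivIsetS sUs _; case/and3P: (porbits_partition s).
rewrite -(@card_in_imset _ _ (@cover T)); last first.
  move=> U V; rewrite !inE => /andP[sUs _] /andP[sVs _] eqUV.
  by apply/eqP; rewrite eqEsubset !(cover_porbitsS sUs sVs, cover_porbitsS sVs sUs) ?eqUV.
apply: eq_card => B; rewrite inE; apply/andP/imsetP => [[/eqP <- /eqP sB] | [U]].
  set U := [set O in porbits s | O \subset B].
  have sUs : U \subset porbits s by apply/subsetP => O; rewrite inE => /andP[].
  exists U; last exact: stable_set_cover.
  by rewrite !inE sUs sum_cover //= -stable_set_cover.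
rewrite !inE => /andP[sUs /eqP <-] ->.
by rewrite sum_cover // stable_cover.
Qed.

Lemma card_porbit_eq s x d : 0 < d -> iter d s x = x ->
  (forall i, 0 < i < d -> iter i s x != x) -> #|porbit s x| = d.
Proof.
move=> d_gt0 sdx sx_neq; apply/eqP; rewrite eqn_leq; apply/andP; split.
  have /loopingP in_traject : looping s x d.
    by rewrite /looping sdx -(prednK d_gt0) mem_head.
  rewrite -(size_traject s x d); apply: leq_trans (card_size _).
  by apply/subset_leq_card/subsetP => _ /porbitP[i ->]; rewrite permX.
rewrite leqNgt; apply/negP => lt_d.
have := sx_neq #|porbit s x|; rewrite lt0n card_porbit_neq0 lt_d iter_porbit eqxx.
by move/(_ isT).
Qed.

Lemma sum_card_eq (P : {set {set T}}) d :
  {in P, forall O : {set T}, #|O| = d} -> \sum_(O in P) #|O| = #|P| * d.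
Proof. by move=> card_d; rewrite -sum_nat_const; apply: eq_bigr. Qed.

Lemma card_stable_sets_uniform s d r : 0 < d -> (forall x, #|porbit s x| = d) ->
  #|stable_sets s r| = binomq (#|T| %/ d) r d.
Proof.
move=> d_gt0 cycle_d.
have card_d : {in porbits s, forall O : {set T}, #|O| = d} by move=> _ /imsetP[x _ ->].
have card_T : #|T| = #|porbits s| * d.
  by rewrite -cardsT (card_partition (porbits_partition s)) (sum_card_eq card_d).
rewrite card_stable_sets card_T mulnK // -card_draws_mul //; apply: eq_card => U.
rewrite !inE; case sUs: (U \subset porbits s) => //=.
by rewrite (@sum_card_eq _ d) // => O /(subsetP sUs)/card_d.
Qed.

Section Involution.
Variable s : {perm T}.
Hypothesis sK : involutive s.

Let fixed := [set x | s x == x].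
Let singletons := [set O : {set T} | #|O| == 1].
Let fixed_orbits := porbits s :&: singletons.
Let moved_orbits := porbits s :\: singletons.

Lemma card_porbit_involution x : #|porbit s x| = if s x == x then 1 else 2.
Proof.
by case: eqP => sx; apply: card_porbit_eq => //= -[|[|i]] //= _; apply/eqP.
Qed.

Lemma porbit_fixed x : s x = x -> porbit s x = [set x].
Proof.
move=> sx; apply/esym/eqP; rewrite eqEcard sub1set porbit_id cards1.
by rewrite card_porbit_involution sx eqxx.
Qed.

Lemma card_fixed_orbits : #|fixed_orbits| = #|fixed|.
Proof.
have -> : fixed_orbits = set1 @: fixed.
  apply/setP => O; rewrite !inE; apply/andP/imsetP => [[/imsetP[x _ ->]] | [x]].
    rewrite card_porbit_involution; have [sx _ | //] := eqVneq (s x) x.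
    by exists x; rewrite ?inE ?sx // porbit_fixed.
  rewrite inE => /eqP sx ->; rewrite -porbit_fixed // imset_f //.
  by rewrite card_porbit_involution sx eqxx.
exact: card_imset set1_inj.
Qed.

Lemma card_moved_orbit : {in moved_orbits, forall O : {set T}, #|O| = 2}.
Proof.
move=> O; rewrite !inE => /andP[not1 /imsetP[x _ defO]].
by move: not1; rewrite defO card_porbit_involution; case: (s x == x).
Qed.

Lemma sum_card_porbits_involution U : U \subset porbits s ->
  \sum_(O in U) #|O| = #|U :&: fixed_orbits| + #|U :&: moved_orbits| * 2.
Proof.
move=> sUs; rewrite (big_setID singletons) /=.
have -> : U :&: singletons = U :&: fixed_orbits.
  by rewrite /fixed_orbits setIA (setIidPl sUs).
have -> : U :\: singletons = U :&: moved_orbits.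
  by rewrite /moved_orbits !setDE setIA (setIidPl sUs).
rewrite (@sum_card_eq _ 1) ?muln1 ?(@sum_card_eq _ 2) // => O; rewrite inE => /andP[_].
  exact: card_moved_orbit.
by rewrite !inE => /andP[_ /eqP].
Qed.

Lemma card_stable_sets_involution r : #|stable_sets s r| =
  \sum_(0 <= t < r.+1) 'C(#|fixed|, t) * binomq ((#|T| - #|fixed|) %/ 2) (r - t) 2.
Proof.
have porbitsE : fixed_orbits :|: moved_orbits = porbits s by apply: setID.
have card_T : #|T| = #|fixed| + #|moved_orbits| * 2.
  rewrite -cardsT (card_partition (porbits_partition s)) sum_card_porbits_involution //.
  by rewrite (setIidPr (subsetIl _ _)) (setIidPr (subsetDl _ _)) card_fixed_orbits.
have disj_orbits : [disjoint fixed_orbits & moved_orbits].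
  by rewrite -setI_eq0 /fixed_orbits /moved_orbits setDE setIACA setICr setI0.
rewrite card_T addKn mulnK // card_stable_sets -card_fixed_orbits.
rewrite -card_weighted_draws // porbitsE; apply: eq_card => U; rewrite !inE.
by case sUs: (U \subset porbits s); rewrite //= sum_card_porbits_involution.
Qed.

End Involution.
End StableSets.

Definition d4_mul_table : seq (seq nat) :=
  [:: [:: 0; 1; 2; 3; 4; 5; 6; 7]; [:: 1; 2; 3; 0; 7; 6; 4; 5];
      [:: 2; 3; 0; 1; 5; 4; 7; 6]; [:: 3; 0; 1; 2; 6; 7; 5; 4];
      [:: 4; 6; 5; 7; 0; 2; 1; 3]; [:: 5; 7; 4; 6; 2; 0; 3; 1];
      [:: 6; 5; 7; 4; 3; 1; 0; 2]; [:: 7; 4; 6; 5; 1; 3; 2; 0]].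

Definition d4_mul (g h : 'I_8) : 'I_8 := inord (nth 0 (nth [::] d4_mul_table g) h).

Definition d4_inv (g : 'I_8) : 'I_8 := inord (nth 0 [:: 0; 3; 2; 1; 4; 5; 6; 7] g).

Lemma d4_mulE n g h (c : cell n) : d4 (d4_mul g h) c = d4 h (d4 g c).
Proof.
case: c => i j.
case: g => -[|[|[|[|[|[|[|[|g]]]]]]]] lt_g //; case: h => -[|[|[|[|[|[|[|[|h]]]]]]]] lt_h //.
all: by rewrite /d4_mul /d4 /= (@inordK 7) //= ?rev_ordK.
Qed.

Lemma d4K n g : cancel (@d4 n g) (d4 (d4_inv g)).
Proof.
case=> i j; case: g => -[|[|[|[|[|[|[|[|g]]]]]]]] lt_g //.
all: by rewrite /d4_inv /d4 /= (@inordK 7) //= ?rev_ordK.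
Qed.

Definition d4_perm n g : {perm cell n} := perm (can_inj (@d4K n g)).

Lemma d4_permE n g c : d4_perm n g c = d4 g c.
Proof. by rewrite permE. Qed.

Lemma d4_permM n g h : (d4_perm n g * d4_perm n h)%g = d4_perm n (d4_mul g h).
Proof. by apply/permP => c; rewrite permM !d4_permE d4_mulE. Qed.

Lemma d4_perm0 n : d4_perm n ord0 = 1%g.
Proof. by apply/permP => -[i j]; rewrite d4_permE perm1. Qed.

Lemma d4_perm_inj n : 1 < n -> injective (d4_perm n).
Proof.
(* A symmetry is determined by the images of the cells (0,0) and (0,1). *)
case: n => [|[|m]] // _ g h eq_gh; apply: val_inj.
have := congr1 (fun p : {perm _} => p (ord0, ord0)) eq_gh.
have := congr1 (fun p : {perm _} => p (ord0, Ordinal (isT : 1 < m.+2))) eq_gh.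
rewrite /= !d4_permE {eq_gh}.
case: g => -[|[|[|[|[|[|[|[|g]]]]]]]] lt_g //; case: h => -[|[|[|[|[|[|[|[|h]]]]]]]] lt_h //=.
all: move=> /pair_equal_spec[/(congr1 val) /= ? /(congr1 val) /= ?].
all: move=> /pair_equal_spec[/(congr1 val) /= ? /(congr1 val) /= ?]; lia.
Qed.

Definition D4 n := [set d4_perm n g | g : 'I_8].

Lemma group_set_D4 n : group_set (D4 n).
Proof.
apply/group_setP; split; first by rewrite -(d4_perm0 n) imset_f.
by move=> _ _ /imsetP[g _ ->] /imsetP[h _ ->]; rewrite d4_permM imset_f.
Qed.

Canonical D4_group n := Group (group_set_D4 n).

Lemma setact_perm (T : finType) (a : {perm T}) (B : {set T}) : ('P^*)%act B a = a @: B.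
Proof. by rewrite /= setactE; apply: eq_imset. Qed.

Lemma d4_board_perm n g (B : {set cell n}) : d4_board g B = d4_perm n g @: B.
Proof. by apply: eq_imset => c; rewrite d4_permE. Qed.

Lemma orbits_D4 n r : orbits n r = orbit ('P^*)%act (D4 n) @: boards n r.
Proof.
apply: eq_in_imset => B boardB; apply/setP => B'.
rewrite inE /orbit /d4_equiv.
apply/andP/imsetP => [[_ /existsP[g /eqP <-]] | [_ /imsetP[g _ ->] ->]].
  by exists (d4_perm n g); rewrite ?imset_f // setact_perm d4_board_perm.
rewrite setact_perm -d4_board_perm; split; last by apply/existsP; exists g.
by move: boardB; rewrite !inE d4_board_perm (card_imset _ perm_inj).
Qed.

Lemma burnside_boards n r : 1 < n ->
  8 * #|orbits n r| = \sum_(g < 8) #|stable_sets (d4_perm n g) r|.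
Proof.
move=> n_gt1.
have acts_boards : [acts D4 n, on boards n r | 'P^*].
  by apply/actsP => a _ B; rewrite !inE setact_perm (card_imset _ perm_inj).
have card_D4 : #|D4 n| = 8 by rewrite (card_imset _ (d4_perm_inj n_gt1)) card_ord.
rewrite orbits_D4 -{1}card_D4 mulnC -(Frobenius_Cauchy acts_boards) /= big_imset /=.
  by apply: eq_bigr => g _; apply: eq_card => B; rewrite !inE sub1set inE setact_perm.
by move=> g h _ _; apply: d4_perm_inj.
Qed.

Section EvenGrid.
Variable k : nat.
Local Notation n := (2 * k).

Definition d4_order (g : 'I_8) : nat := match val g with 0 => 1 | 1 | 3 => 4 | _ => 2 end.

Lemma card_porbit_d4 g c : val g < 6 -> #|porbit (d4_perm n g) c| = d4_order g.
Proof.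
case: c => i j; have lt_i := ltn_ord i; have lt_j := ltn_ord j.
case: g => -[|[|[|[|[|[|g]]]]]] lt_g //= _; apply: card_porbit_eq => //=.
all: rewrite ?d4_permE /= ?rev_ordK //.
all: case=> [|[|[|[|m]]]] //= _; rewrite ?d4_permE /=; apply/eqP.
all: move=> /pair_equal_spec[/(congr1 val) /= ? /(congr1 val) /= ?]; lia.
Qed.

Lemma card_cell : #|{: cell n}| = 4 * k ^ 2.
Proof. by rewrite card_prod card_ord; lia. Qed.

Lemma card_stable_boards_semiregular g r : val g < 6 ->
  #|stable_sets (d4_perm n g) r| = binomq (4 * k ^ 2 %/ d4_order g) r (d4_order g).
Proof.
move=> lt_g6; rewrite -card_cell (@card_stable_sets_uniform _ _ (d4_order g)) // => [|c].
  by case: g lt_g6 => -[|[|[|[|g]]]].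
exact: card_porbit_d4.
Qed.

Lemma card_fixed_diagonal g : 5 < val g -> #|[set c | d4_perm n g c == c]| = n.
Proof.
move=> gt_g5; have [g6 | g7] : val g = 6 \/ val g = 7.
- by case: g gt_g5 => -[|[|[|[|[|[|[|[|g]]]]]]]] //= _ _; [left | right].
- have -> : [set c | d4_perm n g c == c] = [set (i, i) | i : 'I_n].
    apply/setP => -[i j]; rewrite inE d4_permE /d4 g6; apply/eqP/imsetP.
      by move=> [-> _]; exists i.
    by case=> l _ [-> ->].
  by rewrite card_imset ?card_ord // => i j [].
have -> : [set c | d4_perm n g c == c] = [set (i, rev_ord i) | i : 'I_n].
  apply/setP => -[i j]; rewrite inE d4_permE /d4 g7; apply/eqP/imsetP.
    by move=> [_ <-]; exists i; rewrite ?rev_ordK.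
  by case=> l _ [-> ->]; rewrite rev_ordK.
by rewrite card_imset ?card_ord // => i j [].
Qed.

Lemma card_stable_boards_diagonal g r : 5 < val g ->
  #|stable_sets (d4_perm n g) r| =
  \sum_(0 <= t < r.+1) 'C(2 * k, t) * binomq (k * (2 * k - 1)) (r - t) 2.
Proof.
move=> gt_g5; rewrite card_stable_sets_involution; last first.
  by case=> i j; case: g gt_g5 => -[|[|[|[|[|[|[|[|g]]]]]]]] lt_g //= _;
    rewrite !d4_permE /= ?rev_ordK.
rewrite card_fixed_diagonal // card_cell.
by rewrite (_ : 4 * k ^ 2 - 2 * k = k * (2 * k - 1) * 2) ?mulnK //; nia.
Qed.

Lemma card_stable_boards g r : #|stable_sets (d4_perm n g) r| =
  if val g < 6 then binomq (4 * k ^ 2 %/ d4_order g) r (d4_order g)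
  else \sum_(0 <= t < r.+1) 'C(2 * k, t) * binomq (k * (2 * k - 1)) (r - t) 2.
Proof.
case: ltnP => [lt_g6 | ge_g6]; first exact: card_stable_boards_semiregular.
exact: card_stable_boards_diagonal.
Qed.

End EvenGrid.

Import GRing.Theory Num.Theory.
Local Open Scope ring_scope.

Theorem proposition5p1 (k r : nat) :
  (1 <= k)%N -> (1 <= r <= 4 * k ^ 2)%N ->
  (#|orbits (2 * k) r|)%:R =
    (1 / 8 : rat) *
    ('C(4 * k ^ 2, r) + 2 * binomq (k ^ 2) r 4 + 3 * binomq (2 * k ^ 2) r 2
     + 2 * \sum_(0 <= t < r.+1) 'C(2 * k, t) * binomq (k * (2 * k - 1)) (r - t) 2)%N%:R.
Proof.
move=> k_gt0 _.
have n_gt1 : (1 < 2 * k)%N by lia.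
have := burnside_boards r n_gt1.
rewrite (eq_bigr _ (fun g _ => card_stable_boards k g r)).
have div4 : (4 * k ^ 2 %/ 4 = k ^ 2)%N by lia.
have div2 : (4 * k ^ 2 %/ 2 = 2 * k ^ 2)%N by lia.
rewrite !big_ord_recl big_ord0 /= /d4_order /= divn1 div4 div2.
rewrite {1}/binomq dvd1n divn1 => burnside8.
rewrite [in RHS](_ : (_ + _ = 8 * #|orbits (2 * k) r|)%N); last by rewrite burnside8; lia.
by rewrite natrM mulrA mul1r mulVf // mul1r.
Qed.
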